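(* The $C^*$-algebra $\bigoplus^0_{n\in\mathbb{N}}M_n(\mathbb{C})$ is symmetrically pseudo-amenable.
   Context: $M_n(\mathbb{C})$ is the algebra of complex $n\times n$ matrices (with its $C^*$-norm). $\bigoplus^0_{n\in\mathbb{N}}M_n(\mathbb{C})$ is the set of sequences $(x_n)$ with $x_n\in M_n(\mathbb{C})$ and $\|x_n\|\to0$, with the sup norm and coordinatewise operations. For a Banach algebra $\mathfrak{U}$, $\mathfrak{U}\widehat{\otimes}\mathfrak{U}$ is the projective tensor product, with $a(b\otimes c)=ab\otimes c$, $(b\otimes c)a=b\otimes ca$, and $\pi(b\otimes c)=bc$ (extended linearly and continuously). The flip is $(b\otimes c)^{\circ}=c\otimes b$; $\mathbf{t}$ is symmetric if $\mathbf{t}^\circ=\mathbf{t}$. An approximate diagonal is a net $\{\mathbf{t}_\lambda\}$ in $\mathfrak{U}\widehat{\otimes}\mathfrak{U}$ (not necessarily bounded) with $a\mathbf{t}_\lambda-\mathbf{t}_\lambda a\to0$ and $\pi(\mathbf{t}_\lambda)a\to a$ for all $a\in\mathfrak{U}$. $\mathfrak{U}$ is symmetrically pseudo-amenable if it has an approximate diagonal consisting of symmetric elements. *)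

From HB Require Import structures.
From mathcomp Require Import all_boot all_order all_algebra.
From mathcomp Require Import all_classical all_reals.
From mathcomp Require Import topology normedtype sequences.
From mathcomp Require Import complex.
From Stdlib Require List.
Set Implicit Arguments. Unset Strict Implicit. Unset Printing Implicit Defensive.
Import Order.TTheory GRing.Theory Num.Theory.
Import numFieldNormedType.Exports.
Local Open Scope classical_set_scope.
Local Open Scope ring_scope.

Section Defs.
Variable R : realType.
Local Notation C := (complex R).

Definition vnorm (m : nat) (v : 'cV[C]_m) : R :=
  Num.sqrt (\sum_(i < m) (complex.Re (v i ord0) ^+ 2 + complex.Im (v i ord0) ^+ 2)).

Definition opnorm (m : nat) (A : 'M[C]_m) : R :=
  sup [set vnorm (A *m v) | v in [set v : 'cV[C]_m | vnorm v <= 1]].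

(** Ambient type: all sequences (x_n)_{n >= 1} with x_n in M_n(C)
    (index k stands for n = k+1). *)
Definition mxseq := forall k : nat, 'M[C]_k.+1.

Definition in_c0 (x : mxseq) : Prop :=
  (fun k => opnorm (x k)) @ \oo --> (0 : R).

Definition supnorm (x : mxseq) : R := sup (range (fun k => opnorm (x k))).

Definition sadd (x y : mxseq) : mxseq := fun k => x k + y k.
Definition sopp (x : mxseq) : mxseq := fun k => - x k.
Definition smul (x y : mxseq) : mxseq := fun k => x k *m y k.
Definition sscale (c : C) (x : mxseq) : mxseq := fun k => c *: x k.
Definition szero : mxseq := fun k => 0.

(** A formal tensor is a finite list of pairs, sum of x (x) y. *)
Definition ftensor := seq (mxseq * mxseq).

Fixpoint tinU (t : ftensor) : Prop :=
  match t with
  | [::] => True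
  | p :: t' => in_c0 p.1 /\ in_c0 p.2 /\ tinU t'
  end.

(** Free vector space over U x U: finitely supported functions. *)
Definition delta (z : mxseq * mxseq) : mxseq * mxseq -> C :=
  fun w => (asbool (z = w))%:R.

Definition fs (t : ftensor) : mxseq * mxseq -> C :=
  fun w => \sum_(p <- t) delta p w.

(** Generators of the bilinearity relations (with entries in U). *)
Definition tensor_rel (g : mxseq * mxseq -> C) : Prop :=
  (exists x x' y, [/\ in_c0 x, in_c0 x' & in_c0 y] /\
     (g = (fun w => delta (sadd x x', y) w - delta (x, y) w - delta (x', y) w) \/
      g = (fun w => delta (y, sadd x x') w - delta (y, x) w - delta (y, x') w)))
  \/
  (exists (c : C) x y, in_c0 x /\ in_c0 y /\
     (g = (fun w => delta (sscale c x, y) w - c * delta (x, y) w) \/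
      g = (fun w => delta (x, sscale c y) w - c * delta (x, y) w))).

(** Equality in the algebraic tensor product: the difference of the formal
    sums lies in the span of the bilinearity relations. *)
Definition tequiv (t t' : ftensor) : Prop :=
  exists s : seq (C * (mxseq * mxseq -> C)),
    (forall q, List.In q s -> tensor_rel q.2) /\
    forall w, fs t w - fs t' w = \sum_(q <- s) q.1 * q.2 w.

Definition projnorm (t : ftensor) : R :=
  inf [set \sum_(p <- t') (supnorm p.1 * supnorm p.2) |
        t' in [set t' : ftensor | tinU t' /\ tequiv t' t]].

Definition tsub (t t' : ftensor) : ftensor :=
  t ++ map (fun p => (sopp p.1, p.2)) t'.
Definition tlmul (a : mxseq) (t : ftensor) : ftensor :=
  map (fun p => (smul a p.1, p.2)) t.
Definition trmul (t : ftensor) (a : mxseq) : ftensor :=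
  map (fun p => (p.1, smul p.2 a)) t.
Definition tflip (t : ftensor) : ftensor := map (fun p => (p.2, p.1)) t.
Definition tpi (t : ftensor) : mxseq :=
  foldr sadd szero (map (fun p => smul p.1 p.2) t).

(** Elements are represented by Cauchy sequences (for the projective norm)
    of algebraic tensors; two representatives are identified when their
    distance is 0. *)
Definition ptensor := nat -> ftensor.

Definition pt_valid (u : ptensor) : Prop :=
  (forall k, tinU (u k)) /\
  forall e : R, 0 < e -> exists N, forall k l, (N <= k)%N -> (N <= l)%N ->
    projnorm (tsub (u k) (u l)) < e.

Definition ptnorm (u : ptensor) : R := limn (fun k => projnorm (u k)).

Definition ptsub (u v : ptensor) : ptensor := fun k => tsub (u k) (v k).
Definition ptlmul (a : mxseq) (u : ptensor) : ptensor := fun k => tlmul a (u k).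
Definition ptrmul (u : ptensor) (a : mxseq) : ptensor := fun k => trmul (u k) a.
Definition ptflip (u : ptensor) : ptensor := fun k => tflip (u k).

Definition pt_symmetric (u : ptensor) : Prop := ptnorm (ptsub (ptflip u) u) = 0.

(** || pi(u) a - a ||, where pi is the continuous extension of
    multiplication: pi(u) = lim_k pi(u_k) in U. *)
Definition pi_defect (u : ptensor) (a : mxseq) : R :=
  limn (fun k => supnorm (sadd (smul (tpi (u k)) a) (sopp a))).

Definition directed (I : Type) (le : I -> I -> Prop) : Prop :=
  [/\ (exists i : I, True), (forall i, le i i),
      (forall i j k, le i j -> le j k -> le i k) &
      (forall i j, exists k, le i k /\ le j k)].

Definition net_to0 (I : Type) (le : I -> I -> Prop) (r : I -> R) : Prop :=
  forall e : R, 0 < e -> exists i0, forall i, le i0 i -> `|r i| < e.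

Definition symmetric_approx_diagonal (I : Type) (le : I -> I -> Prop)
    (t : I -> ptensor) : Prop :=
  directed le /\
  (forall i, pt_valid (t i)) /\
  (forall i, pt_symmetric (t i)) /\
  (forall a, in_c0 a ->
     net_to0 le (fun i => ptnorm (ptsub (ptlmul a (t i)) (ptrmul (t i) a)))) /\
  (forall a, in_c0 a -> net_to0 le (fun i => pi_defect (t i) a)).

Definition c0_Mn_symm_pseudo_amenable : Prop :=
  exists (I : Type) (le : I -> I -> Prop) (t : I -> ptensor),
    symmetric_approx_diagonal le t.

End Defs.

Set Warnings "-notation-overridden -ambiguous-paths -notation-incompatible-prefix -deprecated".
From HB Require Import structures.
From mathcomp Require Import all_boot all_order all_algebra.
From mathcomp Require Import all_classical all_reals.
From mathcomp Require Import topology normedtype sequences.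
From mathcomp Require Import complex.
Set Implicit Arguments. Unset Strict Implicit. Unset Printing Implicit Defensive.
Import Order.TTheory GRing.Theory Num.Theory.
Import numFieldNormedType.Exports.
Local Open Scope classical_set_scope.
Local Open Scope ring_scope.

(* The n-th block M_n(C) carries the diagonal d_n = (1/n) sum_(i,j) e_ij (x) e_ji,
   which is symmetric, commutes exactly with every a in M_n(C), and has
   pi(d_n) = 1.  The truncations t_N = d_1 + ... + d_N (each a constant Cauchy
   sequence in the completion) therefore satisfy a t_N = t_N a and t_N^o = t_N
   in the algebraic tensor product, while pi(t_N) a - a vanishes in the blocks
   below N, so its sup norm is at most sup_(k >= N) ||a_k||, which tends to 0. *)

Lemma mulmx_delta (K : comRingType) m (a : 'M[K]_m) (i j : 'I_m) :
  a *m delta_mx i j = \sum_l a l i *: delta_mx l j.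
Proof.
apply/matrixP => r s; rewrite !mxE summxE (bigD1 i) //= big1 => [|l /negbTE nl].
  rewrite !mxE eqxx /= addr0 (bigD1 r) //= big1 => [|l /negbTE nl].
    by rewrite !mxE eqxx /= addr0 mulrC.
  by rewrite !mxE eq_sym nl /= mulr0.
by rewrite !mxE nl /= mulr0.
Qed.

Lemma delta_mulmx (K : pzRingType) m (a : 'M[K]_m) (i j : 'I_m) :
  delta_mx j i *m a = \sum_l a i l *: delta_mx j l.
Proof.
apply/matrixP => r s; rewrite !mxE summxE.
rewrite (bigD1 i) //= big1 => [|l /negbTE nl]; last by rewrite !mxE nl andbF mul0r.
rewrite (bigD1 s) //= big1 => [|l /negbTE nl]; last first.
  by rewrite !mxE [s == l]eq_sym nl andbF mulr0.
rewrite !mxE !eqxx !andbT !addr0.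
by case: (r == j); rewrite ?mulr1 ?mulr0 ?mul1r ?mul0r.
Qed.

Lemma sum_mul_delta_mx_tr (K : pzRingType) n :
  \sum_(i < n) \sum_(j < n) (delta_mx i j *m delta_mx j i : 'M[K]_n) = n%:R *: 1%:M.
Proof.
under eq_bigr => i _ do under eq_bigr => j _ do rewrite mul_delta_mx.
apply/matrixP => r s; rewrite summxE.
rewrite (eq_bigr (fun i => n%:R * ((r == i) && (s == i))%:R)) => [|i _]; last first.
  rewrite summxE (eq_bigr (fun _ => ((r == i) && (s == i))%:R)) => [|j _].
    by rewrite sumr_const card_ord mulr_natl.
  by rewrite mxE.
rewrite (bigD1 r) //= big1 => [|i ni]; last by rewrite eq_sym (negbTE ni) mulr0.
by rewrite !mxE eqxx /= addr0 eq_sym.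
Qed.

Section SymmetricDiagonal.
Variable R : realType.
Local Notation C := (complex R).
Local Notation U := (mxseq R).
Local Notation F := (U * U -> C).

Lemma vnorm0 m : vnorm (0 : 'cV[C]_m) = 0.
Proof. by rewrite /vnorm big1 ?sqrtr0 // => i _; rewrite mxE /= expr0n /= addr0. Qed.

Lemma vnormN m (v : 'cV[C]_m) : vnorm (- v) = vnorm v.
Proof.
rewrite /vnorm; congr Num.sqrt; apply: eq_bigr => i _.
by rewrite mxE; case: (v i ord0) => a b /=; rewrite !sqrrN.
Qed.

Lemma opnorm_ge0 m (A : 'M[C]_m) : 0 <= opnorm A.
Proof.
rewrite /opnorm; set S := [set _ | _ in _].
have S0 : S 0 by exists 0; rewrite /= ?mulmx0 vnorm0.
have [supS|/sup_out->//] := pselect (has_sup S).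
exact: (sup_upper_bound supS).
Qed.

Lemma opnorm0 m : opnorm (0 : 'M[C]_m) = 0.
Proof.
apply/eqP; rewrite eq_le opnorm_ge0 andbT /opnorm.
apply: ge_sup; first by exists 0, 0; rewrite /= ?vnorm0 ?mul0mx ?vnorm0.
by move=> x [v _ <-]; rewrite mul0mx vnorm0.
Qed.

Lemma opnormN m (A : 'M[C]_m) : opnorm (- A) = opnorm A.
Proof.
rewrite /opnorm; congr sup; apply/seteqP; split => x [v Hv <-]; exists v => //;
by rewrite mulNmx vnormN.
Qed.

Lemma supnorm_ge0 (x : U) : 0 <= supnorm x.
Proof.
rewrite /supnorm; have [supx|/sup_out->//] := pselect (has_sup (range (fun k => opnorm (x k)))).
by apply: le_trans (opnorm_ge0 (x 0%N)) _; apply: (sup_upper_bound supx); exists 0%N.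
Qed.

Lemma supnorm_le (x : U) b : (forall k, opnorm (x k) <= b) -> supnorm x <= b.
Proof.
move=> xb; apply: ge_sup; first by exists (opnorm (x 0%N)), 0%N.
by move=> y [k _ <-].
Qed.

(* Every sequence entering the diagonal is finitely supported; this is how the
   membership in U demanded by [tensor_rel] is discharged. *)
Definition finsupp (x : U) := exists N, forall k, (N <= k)%N -> x k = 0.

Lemma finsupp_c0 x : finsupp x -> in_c0 x.
Proof.
move=> [N xN]; apply: cvg_near_cst; exists N => // k /= /xN ->; exact: opnorm0.
Qed.

Lemma finsupp0 : finsupp (szero R).
Proof. by exists 0%N. Qed.

Lemma finsuppD x y : finsupp x -> finsupp y -> finsupp (sadd x y).
Proof.
move=> [N xN] [M yM]; exists (maxn N M) => k; rewrite geq_max => /andP[kN kM].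
by rewrite /sadd xN // yM // addr0.
Qed.

Lemma finsuppZ c x : finsupp x -> finsupp (sscale c x).
Proof. by move=> [N xN]; exists N => k /xN; rewrite /sscale => ->; rewrite scaler0. Qed.

Lemma finsuppMr a x : finsupp x -> finsupp (smul x a).
Proof. by move=> [N xN]; exists N => k /xN; rewrite /smul => ->; rewrite mul0mx. Qed.

Definition ssum (I : Type) (s : seq I) (f : I -> U) : U :=
  foldr (fun i acc => sadd (f i) acc) (szero R) s.

Lemma ssumE (I : Type) (s : seq I) (f : I -> U) k : ssum s f k = \sum_(i <- s) f i k.
Proof. by elim: s => [|i s IH] /=; rewrite ?big_nil ?big_cons // /sadd IH. Qed.

Lemma finsupp_ssum (I : Type) (s : seq I) (f : I -> U) :
  (forall i, finsupp (f i)) -> finsupp (ssum s f).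
Proof. by move=> fP; elim: s => [|i s IH] /=; [exact: finsupp0 | exact: finsuppD]. Qed.

(* The span of the bilinearity relations in the free vector space; [teq f g]
   says that [f] and [g] define the same element of the algebraic tensor
   product. *)
Definition rel_span (f : F) := exists s : seq (C * F),
  (forall q, List.In q s -> tensor_rel q.2) /\ forall w, f w = \sum_(q <- s) q.1 * q.2 w.

Definition teq (f g : F) := rel_span (fun w => f w - g w).

Lemma rel_span_ext f g : rel_span f -> (forall w, f w = g w) -> rel_span g.
Proof. by move=> [s [sP fE]] fg; exists s; split => // w; rewrite -fg. Qed.

Lemma rel_span0 : rel_span (fun _ => 0).
Proof. by exists [::]; split => // w; rewrite big_nil. Qed.

Lemma rel_spanD f g : rel_span f -> rel_span g -> rel_span (fun w => f w + g w).
Proof.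
move=> [s [sP fE]] [s' [s'P gE]]; exists (s ++ s'); split.
  by move=> q /(List.in_app_or s s') [/sP | /s'P].
by move=> w; rewrite big_cat fE gE.
Qed.

Lemma rel_spanZ c f : rel_span f -> rel_span (fun w => c * f w).
Proof.
move=> [s [sP fE]]; exists (map (fun q => (c * q.1, q.2)) s); split.
  by move=> q /List.in_map_iff [q' [<- /sP]].
by move=> w; rewrite big_map fE mulr_sumr; apply: eq_bigr => q _; rewrite mulrA.
Qed.

Lemma rel_spanN f : rel_span f -> rel_span (fun w => - f w).
Proof. by move=> /(rel_spanZ (-1)) /rel_span_ext; apply => w; rewrite mulN1r. Qed.

Lemma rel_span_rel g : tensor_rel g -> rel_span g.
Proof. by move=> gP; exists [:: (1, g)]; split => [q [<-|[]]|w] //; rewrite big_seq1 mul1r. Qed.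

Lemma teq_ext f g f' g' : teq f g -> (forall w, f w = f' w) -> (forall w, g w = g' w) ->
  teq f' g'.
Proof. by move=> fg ff' gg'; apply: (rel_span_ext fg) => w; rewrite ff' gg'. Qed.

Lemma teq_refl f : teq f f.
Proof. by apply: (rel_span_ext rel_span0) => w; rewrite subrr. Qed.

Lemma teq_sym f g : teq f g -> teq g f.
Proof. by move=> /rel_spanN /rel_span_ext; apply => w; rewrite opprB. Qed.

Lemma teq_trans f g h : teq f g -> teq g h -> teq f h.
Proof. by move=> fg gh; apply: (rel_span_ext (rel_spanD fg gh)) => w; rewrite addrA subrK. Qed.

Lemma teqD f g f' g' : teq f g -> teq f' g' ->
  teq (fun w => f w + f' w) (fun w => g w + g' w).
Proof. by move=> fg fg'; apply: (rel_span_ext (rel_spanD fg fg')) => w; rewrite opprD addrACA. Qed.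

Lemma teqZ c f g : teq f g -> teq (fun w => c * f w) (fun w => c * g w).
Proof. by move=> /(rel_spanZ c) /rel_span_ext; apply => w; rewrite mulrBr. Qed.

Lemma teq_sum (I : Type) (s : seq I) (G H : I -> F) : (forall i, teq (G i) (H i)) ->
  teq (fun w => \sum_(i <- s) G i w) (fun w => \sum_(i <- s) H i w).
Proof.
move=> GH; elim: s => [|i s IH]; first by apply: teq_ext (teq_refl _) _ _ => w; rewrite !big_nil.
by apply: teq_ext (teqD (GH i) IH) _ _ => w; rewrite big_cons.
Qed.

Lemma teq_deltaDl x x' y : finsupp x -> finsupp x' -> finsupp y ->
  teq (delta (sadd x x', y)) (fun w => delta (x, y) w + delta (x', y) w).
Proof.
move=> /finsupp_c0 xP /finsupp_c0 x'P /finsupp_c0 yP.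
have rel : tensor_rel (fun w => delta (sadd x x', y) w - delta (x, y) w - delta (x', y) w).
  by left; exists x, x', y; split; [split | left].
by apply: (rel_span_ext (rel_span_rel rel)) => w; rewrite opprD addrA.
Qed.

Lemma teq_deltaDr x x' y : finsupp x -> finsupp x' -> finsupp y ->
  teq (delta (y, sadd x x')) (fun w => delta (y, x) w + delta (y, x') w).
Proof.
move=> /finsupp_c0 xP /finsupp_c0 x'P /finsupp_c0 yP.
have rel : tensor_rel (fun w => delta (y, sadd x x') w - delta (y, x) w - delta (y, x') w).
  by left; exists x, x', y; split; [split | right].
by apply: (rel_span_ext (rel_span_rel rel)) => w; rewrite opprD addrA.
Qed.

Lemma teq_deltaZl c x y : finsupp x -> finsupp y ->
  teq (delta (sscale c x, y)) (fun w => c * delta (x, y) w).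
Proof.
move=> /finsupp_c0 xP /finsupp_c0 yP; apply: rel_span_rel; right.
by exists c, x, y; do 2!split => //; left.
Qed.

Lemma teq_deltaZr c x y : finsupp x -> finsupp y ->
  teq (delta (x, sscale c y)) (fun w => c * delta (x, y) w).
Proof.
move=> /finsupp_c0 xP /finsupp_c0 yP; apply: rel_span_rel; right.
by exists c, x, y; do 2!split => //; right.
Qed.

Lemma sscale0 c : sscale c (szero R) = szero R.
Proof. by apply: functional_extensionality_dep => k; rewrite /sscale /szero scaler0. Qed.

Lemma sscale_opp (x : U) : sscale (-1) x = sopp x.
Proof. by apply: functional_extensionality_dep => k; rewrite /sscale /sopp scaleN1r. Qed.

Lemma teq_delta0l y : finsupp y -> teq (delta (szero R, y)) (fun _ => 0).
Proof.
move=> yP; apply: teq_ext (teq_deltaZl 0 finsupp0 yP) _ _ => w;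
by rewrite ?sscale0 ?mul0r.
Qed.

Lemma teq_delta0r y : finsupp y -> teq (delta (y, szero R)) (fun _ => 0).
Proof.
move=> yP; apply: teq_ext (teq_deltaZr 0 yP finsupp0) _ _ => w;
by rewrite ?sscale0 ?mul0r.
Qed.

Lemma teq_deltaNl x y : finsupp x -> finsupp y ->
  teq (delta (sopp x, y)) (fun w => - delta (x, y) w).
Proof.
move=> xP yP; apply: teq_ext (teq_deltaZl (-1) xP yP) _ _ => w;
by rewrite ?sscale_opp ?mulN1r.
Qed.

Lemma teq_delta_suml (I : Type) (s : seq I) (f : I -> U) y :
  (forall i, finsupp (f i)) -> finsupp y ->
  teq (delta (ssum s f, y)) (fun w => \sum_(i <- s) delta (f i, y) w).
Proof.
move=> fP yP; elim: s => [|i s IH] /=.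
  by apply: teq_ext (teq_delta0l yP) _ _ => w; rewrite ?big_nil.
apply: teq_trans (teq_deltaDl (fP i) (finsupp_ssum s fP) yP) _.
by apply: teq_ext (teqD (teq_refl _) IH) _ _ => // w; rewrite big_cons.
Qed.

Lemma teq_delta_sumr (I : Type) (s : seq I) (f : I -> U) y :
  (forall i, finsupp (f i)) -> finsupp y ->
  teq (delta (y, ssum s f)) (fun w => \sum_(i <- s) delta (y, f i) w).
Proof.
move=> fP yP; elim: s => [|i s IH] /=.
  by apply: teq_ext (teq_delta0r yP) _ _ => w; rewrite ?big_nil.
apply: teq_trans (teq_deltaDr (fP i) (finsupp_ssum s fP) yP) _.
by apply: teq_ext (teqD (teq_refl _) IH) _ _ => // w; rewrite big_cons.
Qed.

Lemma fs_cat (t t' : ftensor R) w : fs (t ++ t') w = fs t w + fs t' w.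
Proof. by rewrite /fs big_cat. Qed.

Lemma fs_map (T : Type) (s : seq T) (g : T -> U * U) w :
  fs (map g s) w = \sum_(i <- s) delta (g i) w.
Proof. by rewrite /fs big_map. Qed.

Fixpoint all_finsupp (t : ftensor R) :=
  if t is p :: t' then [/\ finsupp p.1, finsupp p.2 & all_finsupp t'] else True.

Lemma all_finsupp_tinU t : all_finsupp t -> tinU t.
Proof. by elim: t => [|p t IH] //= [/finsupp_c0 ? /finsupp_c0 ? /IH]. Qed.

Lemma all_finsupp_map (T : Type) (s : seq T) (g : T -> U * U) :
  (forall x, finsupp (g x).1 /\ finsupp (g x).2) -> all_finsupp (map g s).
Proof. by move=> gP; elim: s => [|x s IH] //=; case: (gP x). Qed.

Lemma teq_fs_oppl t : all_finsupp t ->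
  teq (fs (map (fun p => (sopp p.1, p.2)) t)) (fun w => - fs t w).
Proof.
elim: t => [|[x y] t IH] /= => [_|[xP yP tP]].
  by apply: teq_ext (teq_refl (fun _ => 0)) _ _ => w; rewrite /fs big_nil ?oppr0.
apply: teq_ext (teqD (teq_deltaNl xP yP) (IH tP)) _ _ => w;
by rewrite /fs big_cons ?opprD.
Qed.

Lemma teq_fs_tsub t t' : all_finsupp t' -> teq (fs t) (fs t') ->
  teq (fs (tsub t t')) (fun _ => 0).
Proof.
move=> t'P tt'; apply: teq_ext (teqD tt' (teq_fs_oppl t'P)) _ _ => w;
by rewrite ?fs_cat ?subrr.
Qed.

Lemma projnorm_eq0 (t : ftensor R) : teq (fs t) (fun _ => 0) -> projnorm t = 0.
Proof.
move=> t0; have tequiv0 : tequiv [::] t.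
  by apply: (rel_span_ext (rel_spanN t0)) => w; rewrite /fs big_nil subr0 sub0r.
rewrite /projnorm; set S := (X in inf X).
have S0 : S 0 by exists [::]; rewrite ?big_nil.
have lbS : lbound S 0.
  by move=> z [t' _ <-]; apply: sumr_ge0 => p _; rewrite mulr_ge0 ?supnorm_ge0.
apply/eqP; rewrite eq_le; apply/andP; split.
  exact: (ge_inf (ex_intro _ 0 lbS)).
by apply: lb_le_inf => //; exists 0.
Qed.

(* The matrix unit e_ij of M_(n+1)(C), placed in block n. *)
Definition matunit (n i j : nat) : U :=
  fun k => if k == n then delta_mx (inord i) (inord j) else 0.

Lemma finsupp_matunit n i j : finsupp (matunit n i j).
Proof.
exists n.+1 => k nk; rewrite /matunit; case: eqVneq => // kn.
by move: nk; rewrite kn ltnn.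
Qed.

Lemma smul_matunitr (a : U) n (i j : 'I_n.+1) :
  smul a (matunit n i j) = ssum (index_enum 'I_n.+1) (fun l => sscale (a n l i) (matunit n l j)).
Proof.
apply: functional_extensionality_dep => k; rewrite /smul ssumE /matunit.
case: eqVneq => [->|kn].
  by rewrite !inord_val mulmx_delta; apply: eq_bigr => l _; rewrite /sscale eqxx !inord_val.
by rewrite mulmx0 big1 // => l _; rewrite /sscale (negbTE kn) scaler0.
Qed.

Lemma smul_matunitl (a : U) n (i j : 'I_n.+1) :
  smul (matunit n j i) a = ssum (index_enum 'I_n.+1) (fun l => sscale (a n i l) (matunit n j l)).
Proof.
apply: functional_extensionality_dep => k; rewrite /smul ssumE /matunit.
case: eqVneq => [->|kn].
  by rewrite !inord_val delta_mulmx; apply: eq_bigr => l _; rewrite /sscale eqxx !inord_val.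
by rewrite mul0mx big1 // => l _; rewrite /sscale (negbTE kn) scaler0.
Qed.

Lemma smul_scaler (a x : U) c : smul a (sscale c x) = sscale c (smul a x).
Proof. by apply: functional_extensionality_dep => k; rewrite /smul /sscale scalemxAr. Qed.

Definition diag_index N : seq (nat * nat * nat) :=
  flatten [seq [seq (nat_of_ord n, nat_of_ord i, nat_of_ord j)
                 | i <- index_enum 'I_n.+1, j <- index_enum 'I_n.+1] | n <- index_enum 'I_N].

Definition diag_term (q : nat * nat * nat) : U * U :=
  (sscale (q.1.1.+1%:R^-1) (matunit q.1.1 q.1.2 q.2), matunit q.1.1 q.2 q.1.2).

Definition tdiag N : ftensor R := map diag_term (diag_index N).

Lemma big_diag_index (V : zmodType) N (G : nat * nat * nat -> V) :
  \sum_(q <- diag_index N) G q =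
  \sum_(n < N) \sum_(i < n.+1) \sum_(j < n.+1) G (nat_of_ord n, nat_of_ord i, nat_of_ord j).
Proof. by rewrite /diag_index big_flatten big_map; apply: eq_bigr => n _; rewrite big_allpairs_dep. Qed.

Lemma all_finsupp_tdiag N : all_finsupp (tdiag N).
Proof. by apply: all_finsupp_map => q; split; [apply: finsuppZ|]; apply: finsupp_matunit. Qed.

Lemma all_finsupp_trmul_tdiag a N : all_finsupp (trmul (tdiag N) a).
Proof.
rewrite /trmul /tdiag -map_comp; apply: all_finsupp_map => q /=.
by split; [apply: finsuppZ | apply: finsuppMr]; apply: finsupp_matunit.
Qed.

Definition tdiag_nf N : F := fun w => \sum_(n < N) \sum_(i < n.+1) \sum_(j < n.+1)
  n.+1%:R^-1 * delta (matunit n i j, matunit n j i) w.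

Lemma teq_tdiag N : teq (fs (tdiag N)) (tdiag_nf N).
Proof.
have nf : teq (fun w => \sum_(n < N) \sum_(i < n.+1) \sum_(j < n.+1)
    delta (diag_term (nat_of_ord n, nat_of_ord i, nat_of_ord j)) w) (tdiag_nf N).
  apply: teq_sum => n; apply: teq_sum => i; apply: teq_sum => j.
  exact: teq_deltaZl (finsupp_matunit _ _ _) (finsupp_matunit _ _ _).
by apply: teq_ext nf _ _ => // w; rewrite /tdiag fs_map big_diag_index.
Qed.

Lemma teq_tflip_tdiag N : teq (fs (tflip (tdiag N))) (tdiag_nf N).
Proof.
have nf : teq (fun w => \sum_(n < N) \sum_(i < n.+1) \sum_(j < n.+1)
    delta (matunit n j i, sscale n.+1%:R^-1 (matunit n i j)) w)
  (fun w => \sum_(n < N) \sum_(i < n.+1) \sum_(j < n.+1)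
    n.+1%:R^-1 * delta (matunit n j i, matunit n i j) w).
  apply: teq_sum => n; apply: teq_sum => i; apply: teq_sum => j.
  exact: teq_deltaZr (finsupp_matunit _ _ _) (finsupp_matunit _ _ _).
apply: teq_ext nf _ _ => w.
  by rewrite /tflip /tdiag -map_comp fs_map big_diag_index.
by apply: eq_bigr => n _; rewrite exchange_big.
Qed.

Definition tdiag_lmul_nf (a : U) N : F := fun w => \sum_(n < N) \sum_(i < n.+1) \sum_(j < n.+1)
  n.+1%:R^-1 * \sum_(l < n.+1) a n l i * delta (matunit n l j, matunit n j i) w.

Definition tdiag_rmul_nf (a : U) N : F := fun w => \sum_(n < N) \sum_(i < n.+1) \sum_(j < n.+1)
  n.+1%:R^-1 * \sum_(l < n.+1) a n i l * delta (matunit n i j, matunit n j l) w.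

Lemma teq_tlmul_tdiag a N : teq (fs (tlmul a (tdiag N))) (tdiag_lmul_nf a N).
Proof.
have uP n i j : finsupp (matunit n i j) := finsupp_matunit n i j.
have sP n (i j : 'I_n.+1) : finsupp (ssum (index_enum 'I_n.+1)
    (fun l : 'I_n.+1 => sscale (a n l i) (matunit n l j))).
  by apply: finsupp_ssum => l; apply: finsuppZ.
have nf : teq (fun w => \sum_(n < N) \sum_(i < n.+1) \sum_(j < n.+1)
    delta (sscale n.+1%:R^-1 (ssum (index_enum 'I_n.+1)
      (fun l : 'I_n.+1 => sscale (a n l i) (matunit n l j))), matunit n j i) w)
  (tdiag_lmul_nf a N).
  apply: teq_sum => n; apply: teq_sum => i; apply: teq_sum => j.
  apply: teq_trans (teq_deltaZl _ (sP n i j) (uP _ _ _)) (teqZ _ _).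
  apply: teq_trans (teq_delta_suml _ (fun l => finsuppZ _ (uP _ _ _)) (uP _ _ _)) _.
  by apply: teq_sum => l; apply: teq_deltaZl.
apply: teq_ext nf _ _ => // w; rewrite /tlmul /tdiag -map_comp fs_map big_diag_index.
by do 3!apply: eq_bigr => ? _; rewrite /= smul_scaler smul_matunitr.
Qed.

Lemma teq_trmul_tdiag a N : teq (fs (trmul (tdiag N) a)) (tdiag_rmul_nf a N).
Proof.
have uP n i j : finsupp (matunit n i j) := finsupp_matunit n i j.
have sP n (i j : 'I_n.+1) : finsupp (ssum (index_enum 'I_n.+1)
    (fun l : 'I_n.+1 => sscale (a n i l) (matunit n j l))).
  by apply: finsupp_ssum => l; apply: finsuppZ.
have nf : teq (fun w => \sum_(n < N) \sum_(i < n.+1) \sum_(j < n.+1)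
    delta (sscale n.+1%:R^-1 (matunit n i j), ssum (index_enum 'I_n.+1)
      (fun l : 'I_n.+1 => sscale (a n i l) (matunit n j l))) w)
  (tdiag_rmul_nf a N).
  apply: teq_sum => n; apply: teq_sum => i; apply: teq_sum => j.
  apply: teq_trans (teq_deltaZl _ (uP _ _ _) (sP n i j)) (teqZ _ _).
  apply: teq_trans (teq_delta_sumr _ (fun l => finsuppZ _ (uP _ _ _)) (uP _ _ _)) _.
  by apply: teq_sum => l; apply: teq_deltaZr.
apply: teq_ext nf _ _ => // w; rewrite /trmul /tdiag -map_comp fs_map big_diag_index.
by do 3!apply: eq_bigr => ? _; rewrite /= smul_matunitl.
Qed.

(* Both normal forms are the same triple sum, with the summation indices
   [i] and [l] exchanged. *)
Lemma tdiag_lmul_rmul_nf a N w : tdiag_lmul_nf a N w = tdiag_rmul_nf a N w.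
Proof.
rewrite /tdiag_lmul_nf /tdiag_rmul_nf; apply: eq_bigr => n _.
under eq_bigr => i _ do under eq_bigr => j _ do rewrite mulr_sumr.
under [RHS]eq_bigr => i _ do under eq_bigr => j _ do rewrite mulr_sumr.
set g := fun x j y : 'I_n.+1 =>
  n.+1%:R^-1 * (a n x y * delta (matunit n x j, matunit n j y) w).
transitivity (\sum_(i < n.+1) \sum_(j < n.+1) \sum_(l < n.+1) g l j i); first by [].
transitivity (\sum_(i < n.+1) \sum_(j < n.+1) \sum_(l < n.+1) g i j l); last by [].
under eq_bigr => i _ do rewrite exchange_big.
by rewrite exchange_big; apply: eq_bigr => i _; rewrite exchange_big.
Qed.

Lemma tpiE (t : ftensor R) k : tpi t k = \sum_(p <- t) p.1 k *m p.2 k.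
Proof. by elim: t => [|p t IH]; rewrite ?big_nil ?big_cons //= /sadd /smul -IH. Qed.

Lemma tpi_tdiag N k : tpi (tdiag N) k = if (k < N)%N then 1 else 0.
Proof.
have off n i j : k != n -> sscale (n.+1%:R^-1) (matunit n i j) k *m matunit n j i k = 0.
  by move=> /negbTE kn; rewrite /sscale /matunit kn scaler0 mul0mx.
rewrite tpiE /tdiag big_map big_diag_index /=; case: ltnP => kN; last first.
  rewrite big1 // => n _; do 2!(apply: big1 => ? _); apply: off.
  by rewrite neq_ltn (leq_trans (ltn_ord n) kN) orbT.
rewrite (bigD1 (Ordinal kN)) //= [X in _ + X]big1 => [|n nk]; last first.
  do 2!(apply: big1 => ? _); apply: off.
  by apply: contra nk => /eqP kn; apply/eqP/val_inj.
under eq_bigr => i _ do under eq_bigr => j _ do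
  rewrite /sscale /matunit eqxx !inord_val -scalemxAl.
under eq_bigr => i _ do rewrite -scaler_sumr.
by rewrite addr0 -scaler_sumr sum_mul_delta_mx_tr scalerA mulVf ?scale1r ?pnatr_eq0.
Qed.

Definition ptconst (t : ftensor R) : ptensor R := fun _ => t.

Lemma ptconst_valid t : all_finsupp t -> pt_valid (ptconst t).
Proof.
move=> tP; split=> [k|e e0]; first exact: all_finsupp_tinU.
exists 0%N => k l _ _; rewrite projnorm_eq0 //.
exact: teq_fs_tsub tP (teq_refl _).
Qed.

Lemma tdiag_symmetric N : pt_symmetric (ptconst (tdiag N)).
Proof.
rewrite /pt_symmetric /ptnorm /ptsub /ptflip /ptconst lim_cst //; apply: projnorm_eq0; apply: teq_fs_tsub.
  exact: all_finsupp_tdiag.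
exact: teq_trans (teq_tflip_tdiag N) (teq_sym (teq_tdiag N)).
Qed.

Lemma tdiag_commute a N :
  ptnorm (ptsub (ptlmul a (ptconst (tdiag N))) (ptrmul (ptconst (tdiag N)) a)) = 0.
Proof.
rewrite /ptnorm /ptsub /ptlmul /ptrmul /ptconst lim_cst //.
apply: projnorm_eq0; apply: teq_fs_tsub; first exact: all_finsupp_trmul_tdiag.
apply: teq_trans (teq_tlmul_tdiag a N) _; apply: teq_trans (teq_sym (teq_trmul_tdiag a N)).
by apply: teq_ext (teq_refl _) _ _ => // w; rewrite tdiag_lmul_rmul_nf.
Qed.

Lemma pi_defect_tdiag a N b : (forall k, (N <= k)%N -> opnorm (a k) <= b) ->
  `|pi_defect (ptconst (tdiag N)) a| <= b.
Proof.
move=> ab; rewrite /pi_defect /ptconst lim_cst // ger0_norm ?supnorm_ge0 //; apply: supnorm_le => k.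
rewrite /sadd /smul /sopp tpi_tdiag; case: ltnP => kN.
  by rewrite mul1mx subrr opnorm0 (le_trans (opnorm_ge0 (a N)) (ab N _)).
by rewrite mul0mx add0r opnormN ab.
Qed.

Lemma directed_leq : directed (fun m n : nat => (m <= n)%N).
Proof.
split => [|//|i j k|i j]; first by exists 0%N.
  exact: leq_trans.
by exists (maxn i j); rewrite leq_maxl leq_maxr.
Qed.

End SymmetricDiagonal.

Theorem mainTheorem6 (R : realType) : c0_Mn_symm_pseudo_amenable R.
Proof.
exists nat, (fun m n => (m <= n)%N), (fun N => ptconst (tdiag R N)).
split; first exact: directed_leq.
split; first by move=> N; apply/ptconst_valid/all_finsupp_tdiag.
split; first exact: tdiag_symmetric.
split; first by move=> a _ e e0; exists 0%N => N _; rewrite tdiag_commute normr0.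
move=> a /cvgrPdist_lt a0 e e0; have [|M _ aM] := a0 (e / 2); first by rewrite divr_gt0.
exists M => N MN; apply: le_lt_trans (pi_defect_tdiag (b := e / 2) _) _.
  move=> k Nk; apply: ltW; apply: le_lt_trans (aM k (leq_trans MN Nk)).
  by rewrite sub0r normrN ler_norm.
by rewrite ltr_pdivrMr // ltr_pMr // ltr1n.
Qed.
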